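(* Let $M>2$ be an integer, $\tau>0$, $p_{\max}>0$, and $\beta_1>\beta_2>0$. Define $$R^{\mathrm{mMIMO}}_{\max}=\tau\log_2\!\left(\frac{\left(\beta_1+\beta_2+p_{\max}\beta_1\beta_2(M-2)\right)^2}{4\beta_1\beta_2}\right)\ \text{ if } p_{\max}\ge\frac{\beta_1-\beta_2}{\beta_1\beta_2(M-2)},\qquad R^{\mathrm{mMIMO}}_{\max}=\tau\log_2\!\left(1+p_{\max}\beta_1(M-2)\right)\ \text{ otherwise},$$ and $R^{\mathrm{NOMA}}_{\max}=\tau\log_2\left(1+p_{\max}\beta_1M\right)$. Let $$M^*=2+\frac{\beta_1-\beta_2}{p_{\max}\beta_1\beta_2}+\frac{2\sqrt2}{\sqrt{p_{\max}\beta_2}}.$$ Then $R^{\mathrm{mMIMO}}_{\max}\ge R^{\mathrm{NOMA}}_{\max}$ for all $M\ge M^*$.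
   Context: $R^{\mathrm{mMIMO}}_{\max}$ is the maximum two-user sum rate $\max\{\tau\log_2(1+(M-2)p_1\beta_1)+\tau\log_2(1+(M-2)p_2\beta_2): p_1,p_2\ge0,\ p_1+p_2\le p_{\max}\}$ of zero-forcing massive MIMO with perfect CSI, and $R^{\mathrm{NOMA}}_{\max}$ is the maximum two-user sum rate of the considered NOMA scheme (all power to the cell-center user). $\beta_1,\beta_2$ are the large-scale fading coefficients of the cell-center and cell-edge users, $M$ the number of base-station antennas, $p_{\max}$ the total normalized power, $\tau$ the fraction of the coherence interval used for data. *)

From Stdlib Require Import Reals Lra Lia.
Open Scope R_scope.

Definition log2 (x : R) : R := ln x / ln 2.

Definition R_mMIMO_max (tau pmax b1 b2 : R) (M : nat) : R :=
  if Rle_dec ((b1 - b2) / (b1 * b2 * (INR M - 2))) pmax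
  then tau * log2 ((b1 + b2 + pmax * b1 * b2 * (INR M - 2)) ^ 2 / (4 * b1 * b2))
  else tau * log2 (1 + pmax * b1 * (INR M - 2)).

Definition R_NOMA_max (tau pmax b1 : R) (M : nat) : R :=
  tau * log2 (1 + pmax * b1 * INR M).

Definition Mstar (pmax b1 b2 : R) : R :=
  2 + (b1 - b2) / (pmax * b1 * b2) + 2 * sqrt 2 / sqrt (pmax * b2).

(** Write [N = M - 2], [a = pmax b1 b2] and [x = a N - (b1 - b2)].  Then
    [b1 + b2 + a N = x + 2 b1], and the arguments of the two logarithms satisfy
    [(b1 + b2 + a N)^2 - 4 b1 b2 (1 + pmax b1 M) = x^2 - 8 pmax b1^2 b2].
    Multiplying [M >= M^*] by [a] gives exactly [x >= b1 sqrt (8 pmax b2)],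
    so the massive-MIMO SINR dominates; since [x >= 0] this also places us in
    the regime [pmax >= (b1 - b2) / (b1 b2 N)] of the closed form. *)

From Stdlib Require Import Reals Lra.
Open Scope R_scope.

Lemma log2_le x y : 0 < x -> x <= y -> log2 x <= log2 y.
Proof.
  intros hx [hxy | ->]; [| lra].
  unfold log2, Rdiv.
  assert (hln2 : 0 < ln 2) by (rewrite <- ln_1; apply ln_increasing; lra).
  apply Rmult_le_compat_r.
  - left; apply Rinv_0_lt_compat; exact hln2.
  - left; apply ln_increasing; assumption.
Qed.

Lemma mMIMO_NOMA_snr_gap pmax b1 b2 N :
  (b1 + b2 + pmax * b1 * b2 * N) ^ 2 - 4 * b1 * b2 * (1 + pmax * b1 * (N + 2))
  = (pmax * b1 * b2 * N - (b1 - b2)) ^ 2 - 8 * pmax * b1 ^ 2 * b2.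
Proof. ring. Qed.

Lemma Mstar_margin pmax b1 b2 N :
  0 < pmax -> 0 < b1 -> 0 < b2 -> Mstar pmax b1 b2 <= N + 2 ->
  2 * sqrt 2 * b1 * sqrt (pmax * b2) <= pmax * b1 * b2 * N - (b1 - b2).
Proof.
  intros hp hb1 hb2 hN; unfold Mstar in hN.
  set (t := sqrt (pmax * b2)) in *.
  assert (ht : 0 < t) by (apply sqrt_lt_R0; nra).
  assert (htt : t * t = pmax * b2) by (apply sqrt_sqrt; nra).
  assert (ha : 0 < pmax * b1 * b2) by (repeat apply Rmult_lt_0_compat; assumption).
  assert (hscaled : pmax * b1 * b2 * ((b1 - b2) / (pmax * b1 * b2) + 2 * sqrt 2 / t)
                    <= pmax * b1 * b2 * N)
    by (apply Rmult_le_compat_l; lra).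
  assert (ha_t : pmax * b1 * b2 = b1 * (t * t)) by (rewrite htt; ring).
  rewrite ha_t in hscaled |- *.
  replace (b1 * (t * t) * ((b1 - b2) / (b1 * (t * t)) + 2 * sqrt 2 / t))
    with (b1 - b2 + 2 * sqrt 2 * b1 * t) in hscaled by (field; lra).
  lra.
Qed.

Lemma NOMA_snr_le_mMIMO_snr pmax b1 b2 N :
  0 < pmax -> 0 < b1 -> 0 < b2 ->
  2 * sqrt 2 * b1 * sqrt (pmax * b2) <= pmax * b1 * b2 * N - (b1 - b2) ->
  1 + pmax * b1 * (N + 2) <= (b1 + b2 + pmax * b1 * b2 * N) ^ 2 / (4 * b1 * b2).
Proof.
  intros hp hb1 hb2 hmargin.
  assert (hb : 0 < 4 * b1 * b2) by nra.
  assert (hroot : 0 <= 2 * sqrt 2 * b1 * sqrt (pmax * b2)).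
  { repeat apply Rmult_le_pos; try lra; apply sqrt_pos. }
  assert (hsq : (2 * sqrt 2 * b1 * sqrt (pmax * b2)) ^ 2 = 8 * pmax * b1 ^ 2 * b2).
  { replace ((2 * sqrt 2 * b1 * sqrt (pmax * b2)) ^ 2)
      with (4 * (sqrt 2 * sqrt 2) * b1 ^ 2 * (sqrt (pmax * b2) * sqrt (pmax * b2)))
      by ring.
    rewrite !sqrt_sqrt by nra; ring. }
  assert (hgap := mMIMO_NOMA_snr_gap pmax b1 b2 N).
  assert (hpow := pow_incr _ _ 2 (conj hroot hmargin)).
  apply (Rmult_le_reg_r (4 * b1 * b2)); [exact hb |].
  rewrite <- Rmult_div_swap, Rmult_div_l by lra.
  lra.
Qed.

Lemma mMIMO_high_power_regime pmax b1 b2 N :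
  0 < b1 -> 0 < b2 -> 0 < N -> b1 - b2 <= pmax * b1 * b2 * N ->
  (b1 - b2) / (b1 * b2 * N) <= pmax.
Proof.
  intros hb1 hb2 hN hle.
  assert (hden : 0 < b1 * b2 * N) by (repeat apply Rmult_lt_0_compat; assumption).
  apply (Rmult_le_reg_r (b1 * b2 * N)); [exact hden |].
  rewrite <- Rmult_div_swap, Rmult_div_l by lra.
  lra.
Qed.

Theorem mainTheorem3 (tau pmax b1 b2 : R) (M : nat) :
  (2 < M)%nat -> 0 < tau -> 0 < pmax -> 0 < b2 -> b2 < b1 ->
  Mstar pmax b1 b2 <= INR M ->
  R_NOMA_max tau pmax b1 M <= R_mMIMO_max tau pmax b1 b2 M.
Proof.
  intros _ htau hp hb2 hb21 hM.
  assert (hb1 : 0 < b1) by lra.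
  set (N := INR M - 2).
  replace (INR M) with (N + 2) in hM by (unfold N; ring).
  assert (hmargin := Mstar_margin pmax b1 b2 N hp hb1 hb2 hM).
  assert (hroot : 0 < 2 * sqrt 2 * b1 * sqrt (pmax * b2)).
  { repeat apply Rmult_lt_0_compat; try lra; apply sqrt_lt_R0; nra. }
  assert (ha : 0 < pmax * b1 * b2) by (repeat apply Rmult_lt_0_compat; assumption).
  assert (hN : 0 < N).
  { apply (Rmult_lt_reg_l (pmax * b1 * b2)); [exact ha |]. rewrite Rmult_0_r; lra. }
  unfold R_NOMA_max, R_mMIMO_max; fold N.
  replace (INR M) with (N + 2) by (unfold N; ring).
  destruct (Rle_dec ((b1 - b2) / (b1 * b2 * N)) pmax) as [_ | hlow].
  - apply Rmult_le_compat_l; [lra |].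
    apply log2_le.
    + assert (0 < pmax * b1 * (N + 2)) by (repeat apply Rmult_lt_0_compat; lra). lra.
    + exact (NOMA_snr_le_mMIMO_snr pmax b1 b2 N hp hb1 hb2 hmargin).
  - exfalso; apply hlow, mMIMO_high_power_regime; lra.
Qed.
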